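(* Let $s\ge 3$ and $n\ge 1$ be integers and let $\{M_1,\dots,M_{s-2}\}$ be a collection of mutually orthogonal sudoku solutions of order $n^2$ with symbols $\{0,1,\dots,n^2-1\}$. The collection is strongly orthogonal if and only if all of the following hold: (i) for every $i\in\{1,\dots,s-2\}$, every canonical $n\times n$ subsquare of $R(M_i)$ is a Latin square (on the symbols $\{0,\dots,n-1\}$); (ii) for every ordered pair of distinct $i,j\in\{1,\dots,s-2\}$ (relevant only when $s\ge 4$): (a) the composite solution $N_{ij}$ is a sudoku solution; (b) each large row of $R(M_i)$ is orthogonal to the corresponding large row of $M_j$; (c) each large column of $R(M_i)$ is orthogonal to the corresponding large column of $M_j$; (iii) for all pairwise distinct $i,j,k\in\{1,\dots,s-2\}$ (relevant only when $s\ge 5$): (a) each large row of $N_{ij}$ is orthogonal to the corresponding large row of $R(M_k)$; (b) each large column of $N_{ij}$ is orthogonal to the corresponding large column of $R(M_k)$; (c) $N_{ij}$ and $M_k$ are orthogonal; (iv) for all pairwise distinct $i,j,k,l\in\{1,\dots,s-2\}$ (relevant only when $s\ge 6$): $N_{ij}$ and $N_{kl}$ are orthogonal.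
   Context: A sudoku solution of order $n^2$ is an $n^2\times n^2$ array with entries in $\{0,1,\dots,n^2-1\}$ in which every symbol appears exactly once in each row, each column, and each of the $n^2$ canonical $n\times n$ subsquares (rows $an,\dots,an+n-1$, columns $bn,\dots,bn+n-1$). Rows and columns are numbered from $0$ (top, left). A location is identified with $(x_1,x_2,x_3,x_4)\in\mathbb{Z}_n^4$, meaning row $x_1n+x_2$ and column $x_3n+x_4$. The large row $x_1$ is the $n\times n^2$ subarray of rows $x_1n,\dots,x_1n+n-1$; the large column $x_3$ is the $n^2\times n$ subarray of columns $x_3n,\dots,x_3n+n-1$. Two arrays of the same shape with symbol sets $A$, $B$ with $|A||B|$ equal to the number of cells are orthogonal if upon superimposition every ordered pair in $A\times B$ appears exactly once. Every $x\in\{0,\dots,n^2-1\}$ is written $x=b_n\cdot n+b_1$ with $b_n,b_1\in\{0,\dots,n-1\}$; $b_n$ is the radix digit and $b_1$ the units digit. For a sudoku solution $M$, the radix solution $R(M)$ is the $n^2\times n^2$ array whose entry at each location is the radix digit of the entry of $M$ there. For sudoku solutions $M_i,M_j$, the composite solution $N_{ij}$ is the $n^2\times n^2$ array whose entry at each location is $n\cdot r_i+r_j$, where $r_i,r_j$ are the entries of $R(M_i),R(M_j)$ at that location. An ordered orthogonal array of type $\mathrm{OOA}(4,s,2,v)$ is a $2s\times v^4$ array over an alphabet of size $v$, whose rows are labeled $(i,j)$, $1\le i\le s$, $j\in\{1,2\}$, such that for every top-justified set $T$ of $4$ rows (i.e. $(i,2)\in T$ implies $(i,1)\in T$) the subarray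 formed by the rows of $T$ contains each $4$-tuple over the alphabet exactly once as a column. Given sudoku solutions $M_1,\dots,M_{s-2}$ of order $n^2$, the associated array is the $2s\times n^4$ array over $\{0,\dots,n-1\}$ having one column for each location $(x_1,x_2,x_3,x_4)\in\mathbb{Z}_n^4$, whose entries in rows $(1,1),(1,2),(2,1),(2,2)$ are $x_1,x_2,x_3,x_4$, and whose entries in rows $(i+2,1)$ and $(i+2,2)$ are the radix digit and units digit, respectively, of the symbol of $M_i$ at that location ($1\le i\le s-2$). A collection $\{M_1,\dots,M_{s-2}\}$ of mutually orthogonal sudoku solutions of order $n^2$ is strongly orthogonal if its associated array is an $\mathrm{OOA}(4,s,2,n)$. *)

From mathcomp Require Import all_boot.
Set Implicit Arguments. Unset Strict Implicit. Unset Printing Implicit Defensive.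

(* A location (x1,x2,x3,x4) in Z_n^4: row x1*n+x2, column x3*n+x4. *)
Definition loc (n : nat) : finType := ('I_n * 'I_n * 'I_n * 'I_n)%type.
Definition lx1 n (x : loc n) : 'I_n := x.1.1.1.
Definition lx2 n (x : loc n) : 'I_n := x.1.1.2.
Definition lx3 n (x : loc n) : 'I_n := x.1.2.
Definition lx4 n (x : loc n) : 'I_n := x.2.

Definition array (n : nat) := loc n -> nat.

Definition sudoku (n : nat) (M : array n) : Prop :=
  [/\ forall x, M x < n * n,
      (forall (a b : 'I_n) (v : nat), v < n * n ->
         #|[set x : loc n | [&& lx1 x == a, lx2 x == b & M x == v]]| = 1),
      (forall (a b : 'I_n) (v : nat), v < n * n ->
         #|[set x : loc n | [&& lx3 x == a, lx4 x == b & M x == v]]| = 1)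
    & (forall (a b : 'I_n) (v : nat), v < n * n ->
         #|[set x : loc n | [&& lx1 x == a, lx3 x == b & M x == v]]| = 1)].

Definition orth_on (n : nat) (D : {set loc n}) (p q : nat) (f g : array n) : Prop :=
  forall u v, u < p -> v < q ->
    #|[set x in D | (f x == u) && (g x == v)]| = 1.

Definition large_row (n : nat) (a : 'I_n) : {set loc n} := [set x | lx1 x == a].
Definition large_col (n : nat) (a : 'I_n) : {set loc n} := [set x | lx3 x == a].

Definition radix (n : nat) (M : array n) : array n := fun x => M x %/ n.
Definition composite (n : nat) (Mi Mj : array n) : array n :=
  fun x => n * radix Mi x + radix Mj x.

Definition subsquares_latin (n : nat) (A : array n) : Prop :=
  (forall (a c b : 'I_n) (v : nat), v < n ->
     #|[set x : loc n | [&& lx1 x == a, lx3 x == c, lx2 x == b & A x == v]]| = 1)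
  /\
  (forall (a c d : 'I_n) (v : nat), v < n ->
     #|[set x : loc n | [&& lx1 x == a, lx3 x == c, lx4 x == d & A x == v]]| = 1).

(* Ordered orthogonal array OOA(4, s, 2, v), rows labelled (i, j) with
   i : 'I_s, j : 'I_2 (0-based versions of (i,j), 1<=i<=s, j in {1,2}),
   columns indexed by a finite type C with #|C| = v^4. *)
Definition top_justified (s : nat) (T : {set 'I_s * 'I_2}) : Prop :=
  forall i : 'I_s, (i, ord_max : 'I_2) \in T -> (i, ord0 : 'I_2) \in T.

Definition is_OOA4 (s v : nat) (C : finType) (A : 'I_s * 'I_2 -> C -> nat) : Prop :=
  #|C| = v ^ 4 /\
  forall T : {set 'I_s * 'I_2}, #|T| = 4 -> top_justified T ->
    forall f : 'I_s * 'I_2 -> 'I_v,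
      #|[set c : C | [forall r in T, A r c == f r]]| = 1.

(* Associated array of M_1..M_{s-2}; the family is indexed by nat, M i for
   i < s-2 being M_{i+1}. *)
Definition assoc_array (s n : nat) (M : nat -> array n)
  (r : 'I_s * 'I_2) (x : loc n) : nat :=
  match val r.1 with
  | 0 => if val r.2 == 0 then val (lx1 x) else val (lx2 x)
  | 1 => if val r.2 == 0 then val (lx3 x) else val (lx4 x)
  | k.+2 => if val r.2 == 0 then M k x %/ n else M k x %% n
  end.

Definition strongly_orthogonal (s n : nat) (M : nat -> array n) : Prop :=
  @is_OOA4 s n (loc n) (@assoc_array s n M).

(* The columns of the associated array are the n^4 locations, and four rows can
   carry n^4 tuples of entries; so four rows contain every tuple exactly once iff
   a location is determined by its entries in those rows.  Think of the rows in
   pairs (i,1),(i,2) as the two digits of a symbol: x1 n + x2 and x3 n + x4 for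
   i = 1, 2, and M_{i-2} otherwise.  A top-justified set of four rows then takes
   both digits of the symbols in a set D and the radix digit of those in a set S,
   with 2|D| + |S| = 4.  By the same counting argument, each of the fifteen
   possible shapes of (D, S) other than D = {1, 2} expresses exactly one of the
   hypotheses (sudoku, pairwise orthogonality) or one clause of (i)-(iv). *)

From Stdlib Require Import Setoid.
From mathcomp Require Import all_boot zify.
Set Implicit Arguments. Unset Strict Implicit. Unset Printing Implicit Defensive.

Lemma divn_digits n a b : b < n -> (n * a + b) %/ n = a.
Proof.
move=> bn; have n_gt0 : 0 < n by case: n bn.
by rewrite mulnC divnMDl // divn_small // addn0.
Qed.

Lemma modn_digits n a b : b < n -> (n * a + b) %% n = b.
Proof. by move=> bn; rewrite mulnC modnMDl modn_small. Qed.

Lemma eqn_digits n a b c d : b < n -> d < n ->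
  (n * a + b == n * c + d) = (a == c) && (b == d).
Proof.
move=> bn dn; apply/eqP/andP => [E | [/eqP-> /eqP->] //].
have := congr1 (divn^~ n) E; have := congr1 (modn^~ n) E.
by rewrite /= !modn_digits ?divn_digits // => -> ->.
Qed.

Lemma digits_lt n a b : a < n -> b < n -> n * a + b < n * n.
Proof. by move=> an bn; nia. Qed.

Lemma divn_lt n u : u < n * n -> u %/ n < n.
Proof. by move=> un; rewrite ltn_divLR //; case: n un => [|n]; rewrite ?muln0. Qed.

Lemma eqn_divmod n u v : (u == v) = (u %/ n == v %/ n) && (u %% n == v %% n).
Proof.
apply/eqP/andP => [-> // | [/eqP ed /eqP em]].
by rewrite (divn_eq u n) (divn_eq v n) ed em.
Qed.

Lemma fibers_card1P (T K : finType) (B : {pred K}) (key : T -> K) :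
  (forall x, key x \in B) -> #|B| = #|T| ->
  (forall b, b \in B -> #|[set x | key x == b]| = 1) <-> injective key.
Proof.
move=> keyB cardB; split=> [fib1 x y exy | key_inj b bB].
  have /cards1P [z Ez] : #|[set u | key u == key x]| == 1 by rewrite fib1.
  have : x \in [set z] by rewrite -Ez inE.
  have : y \in [set z] by rewrite -Ez inE exy.
  by rewrite !inE => /eqP-> /eqP->.
have imB : [set key x | x in T] =i B.
  apply/subset_cardP; first by rewrite card_imset // cardT cardB.
  by apply/subsetP=> _ /imsetP[x _ ->].
have /imsetP [x _ ->] : b \in [set key x | x in T] by rewrite imB.
apply/eqP/cards1P; exists x; apply/setP=> y.
by rewrite !inE; apply/eqP/eqP=> [/key_inj | ->].
Qed.

Lemma selector_card1P (T K : finType) q (g : T -> K) (h : T -> nat) :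
  (forall x, h x < q) -> #|T| = #|K| * q ->
  (forall a v, v < q -> #|[set x | (g x == a) && (h x == v)]| = 1) <->
  (forall x y, (g x == g y) && (h x == h y) -> x = y).
Proof.
move=> hq cardT.
pose key x : K * 'I_q := (g x, Ordinal (hq x)).
have fibE a (v : 'I_q) :
    [set x | key x == (a, v)] = [set x | (g x == a) && (h x == v)].
  by apply/setP=> x; rewrite !inE xpair_eqE.
have keyE x y : (key x == key y) = (g x == g y) && (h x == h y).
  by rewrite xpair_eqE.
have := @fibers_card1P _ _ [set: K * 'I_q] key (fun x => in_setT _).
rewrite cardsT card_prod card_ord -cardT => /(_ erefl) fibP.
split=> [fib1 x y E | inj a v vq].
  have key_inj : injective key by apply/fibP => -[a v] _; rewrite fibE fib1.
  by apply: key_inj; apply/eqP; rewrite keyE.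
have key_inj : injective key by move=> x y /eqP; rewrite keyE => /inj.
by rewrite -[v]/(val (Ordinal vq)) -fibE; apply: (proj2 fibP key_inj).
Qed.

Lemma lines_card1P (T : finType) n q (g1 g2 : T -> 'I_n) (h : T -> nat) :
  (forall x, h x < q) -> #|T| = n * n * q ->
  (forall (a b : 'I_n) v, v < q ->
     #|[set x | [&& g1 x == a, g2 x == b & h x == v]]| = 1) <->
  (forall x y, [&& g1 x == g1 y, g2 x == g2 y & h x == h y] -> x = y).
Proof.
move=> hq cardT.
have := @selector_card1P T ('I_n * 'I_n)%type q (fun x => (g1 x, g2 x)) h hq.
rewrite card_prod !card_ord => /(_ cardT) selP.
have fibE a b v : [set x | [&& g1 x == a, g2 x == b & h x == v]] =
                  [set x | ((g1 x, g2 x) == (a, b)) && (h x == v)].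
  by apply/setP=> x; rewrite !inE xpair_eqE andbA.
split=> [fib1 x y | inj a b v vq].
  by rewrite andbA -xpair_eqE; apply: (proj1 selP) => -[a b] v vq; rewrite -fibE fib1.
by rewrite fibE; apply: (proj2 selP _ _ _ vq) => x y; rewrite xpair_eqE -andbA; apply: inj.
Qed.

Lemma lines3_card1P (T : finType) n q (g1 g2 g3 : T -> 'I_n) (h : T -> nat) :
  (forall x, h x < q) -> #|T| = n * n * n * q ->
  (forall (a b c : 'I_n) v, v < q ->
     #|[set x | [&& g1 x == a, g2 x == b, g3 x == c & h x == v]]| = 1) <->
  (forall x y, [&& g1 x == g1 y, g2 x == g2 y, g3 x == g3 y & h x == h y] -> x = y).
Proof.
move=> hq cardT.
have := @selector_card1P T ('I_n * 'I_n * 'I_n)%type q (fun x => (g1 x, g2 x, g3 x)) h hq.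
rewrite !card_prod !card_ord => /(_ cardT) selP.
have fibE a b c v : [set x | [&& g1 x == a, g2 x == b, g3 x == c & h x == v]] =
                    [set x | ((g1 x, g2 x, g3 x) == (a, b, c)) && (h x == v)].
  by apply/setP=> x; rewrite !inE !xpair_eqE !andbA.
split=> [fib1 x y | inj a b c v vq].
  rewrite !andbA -!xpair_eqE; apply: (proj1 selP) => -[[a b] c] v vq.
  by rewrite -fibE fib1.
by rewrite fibE; apply: (proj2 selP _ _ _ vq) => x y; rewrite !xpair_eqE -!andbA; apply: inj.
Qed.

Lemma orth_on_setTP n p q (f g : array n) :
  (forall x, f x < p) -> (forall x, g x < q) -> #|loc n| = p * q ->
  orth_on setT p q f g <-> (forall x y, (f x == f y) && (g x == g y) -> x = y).
Proof.
move=> fp gq cardT.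
have := @selector_card1P (loc n) 'I_p q (fun x => Ordinal (fp x)) g gq.
rewrite card_ord => /(_ cardT) selP.
have fibE (u : 'I_p) v : [set x in setT | (f x == u) && (g x == v)] =
                         [set x | (Ordinal (fp x) == u) && (g x == v)].
  by apply/setP=> x; rewrite !inE -val_eqE.
split=> [orth x y | inj u v up vq].
  rewrite -[f x == f y]/(Ordinal (fp x) == Ordinal (fp y)).
  by apply: (proj1 selP) => u v vq; rewrite -fibE orth.
by rewrite -[u]/(val (Ordinal up)) fibE; apply: (proj2 selP _ _ _ vq) => x y /inj.
Qed.

Lemma orth_on_fibersP n p q (sel : loc n -> 'I_n) (f g : array n) :
  (forall x, f x < p) -> (forall x, g x < q) -> #|loc n| = n * p * q ->
  (forall a, orth_on [set x | sel x == a] p q f g) <->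
  (forall x y, [&& sel x == sel y, f x == f y & g x == g y] -> x = y).
Proof.
move=> fp gq cardT.
have := @selector_card1P (loc n) ('I_n * 'I_p)%type q (fun x => (sel x, Ordinal (fp x))) g gq.
rewrite [X in _ = X * q]card_prod !card_ord => /(_ cardT) selP.
have fibE a (u : 'I_p) v :
    [set x in [set x | sel x == a] | (f x == u) && (g x == v)] =
    [set x | ((sel x, Ordinal (fp x)) == (a, u)) && (g x == v)].
  by apply/setP=> x; rewrite !inE xpair_eqE -val_eqE andbA.
split=> [orth x y | inj a u v up vq].
  rewrite andbA -[f x == f y]/(Ordinal (fp x) == Ordinal (fp y)) -xpair_eqE.
  by apply: (proj1 selP) => -[a u] v vq; rewrite -fibE orth.
rewrite -[u]/(val (Ordinal up)) fibE; apply: (proj2 selP _ _ _ vq) => x y.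
by rewrite xpair_eqE -val_eqE -andbA; apply: inj.
Qed.

Lemma card_val_in s (D : seq nat) :
  uniq D -> all (fun i => i < s) D -> #|[set i : 'I_s | val i \in D]| = size D.
Proof.
move=> uD Ds.
have E : [set i : 'I_s | val i \in D] =i pmap insub D by move=> i; rewrite inE mem_pmap_sub.
rewrite (eq_card E) (card_uniqP _) ?pmap_sub_uniq // size_pmap_sub.
by apply/eqP; rewrite -all_count.
Qed.

Lemma card_top_justified s (T : {set 'I_s * 'I_2}) : top_justified T ->
  #|T| = (#|[set i | (i, ord_max) \in T]|).*2 +
         #|[set i | ((i, ord0) \in T) && ((i, ord_max) \notin T)]|.
Proof.
move=> tj.
rewrite -!sum1_card -muln2 big_distrl /= !(big_mkcond (mem [set _ | _])) -big_split /=.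
rewrite big_mkcond /= (eq_bigr (fun p => if (p.1, p.2) \in T then 1 else 0)); last by case.
rewrite -(pair_bigA _ (fun i j => if (i, j) \in T then 1 else 0)) /=.
apply: eq_bigr => i _.
rewrite big_ord_recl big_ord1 !inE.
have -> : lift ord0 ord0 = ord_max :> 'I_2 by apply/val_inj.
by have := tj i; case: ((i, ord_max) \in T); case: ((i, ord0) \in T) => // /(_ isT).
Qed.

Lemma card_loc n : #|loc n| = n ^ 4.
Proof. by rewrite !card_prod card_ord !expnS expn0 muln1 !mulnA. Qed.

Section Blocks.
Variables (s n : nat) (M : nat -> array n).
Hypothesis n_gt0 : 0 < n.
Hypothesis M_lt : forall k x, k < s - 2 -> M k x < n * n.

(* Rows (i, 0) and (i, 1) of the associated array are the radix and units digits
   of [symbol i]. *)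
Definition symbol (i : nat) (x : loc n) : nat :=
  match i with
  | 0 => n * lx1 x + lx2 x
  | 1 => n * lx3 x + lx4 x
  | k.+2 => M k x
  end.

(* The top-justified sets of four rows: both rows of the indices in [D], only the
   radix row of those in [S]. *)
Definition block (D S : seq nat) : bool :=
  [&& uniq (D ++ S), all (fun i => i < s) (D ++ S) & (size D).*2 + size S == 4].

Definition block_agree (D S : seq nat) (x y : loc n) : bool :=
  all (fun i => symbol i x == symbol i y) D &&
  all (fun i => symbol i x %/ n == symbol i y %/ n) S.

Definition block_injective (D S : seq nat) : Prop :=
  forall x y, block_agree D S x y -> x = y.

Lemma block_agree_perm D D' S S' : perm_eq D D' -> perm_eq S S' ->
  block_agree D S =2 block_agree D' S'.
Proof. by move=> pD pS x y; rewrite /block_agree (perm_all _ pD) (perm_all _ pS). Qed.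

Lemma block_sort D S : block D S -> block (sort leq D) (sort leq S).
Proof.
have [pD pS] := (permEl (perm_sort leq D), permEl (perm_sort leq S)).
by rewrite /block -(perm_uniq (perm_cat pD pS)) -(perm_all _ (perm_cat pD pS)) !size_sort.
Qed.

Lemma assoc_arrayE (r : 'I_s * 'I_2) x :
  assoc_array M r x = if val r.2 == 0 then symbol r.1 x %/ n else symbol r.1 x %% n.
Proof.
rewrite /assoc_array /symbol; case: r => [[[|[|k]] ?] j] /=; case: (val j == 0) => //.
- by rewrite divn_digits.
- by rewrite modn_digits.
- by rewrite divn_digits.
- by rewrite modn_digits.
Qed.

Lemma assoc_array_lt (r : 'I_s * 'I_2) x : assoc_array M r x < n.
Proof.
rewrite assoc_arrayE; case: ifP => _; last exact: ltn_pmod.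
apply: divn_lt; case: r => [[[|[|k]] ki] j] /=; rewrite ?digits_lt //.
by apply: M_lt; lia.
Qed.

Lemma ooa_rowsP (T : {set 'I_s * 'I_2}) : #|T| = 4 ->
  (forall f : 'I_s * 'I_2 -> 'I_n,
     #|[set c | [forall r in T, assoc_array M r c == f r]]| = 1) <->
  (forall x y, [forall r in T, assoc_array M r x == assoc_array M r y] -> x = y).
Proof.
(* Tuples of entries on [T] are encoded as finite functions equal to [o] off [T]. *)
move=> cardT4; pose o : 'I_n := Ordinal n_gt0.
pose restr (f : 'I_s * 'I_2 -> 'I_n) := [ffun r => if r \in T then f r else o].
pose key c := restr (fun r => Ordinal (assoc_array_lt r c)).
have restr_on f : restr f \in pffun_on o T predT.
  apply/pffun_onP; split=> [|_ /mapP[r _ ->] //].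
  by apply/subsetP=> r; rewrite inE ffunE; case: (r \in T); rewrite ?eqxx.
have eq_restr f g : (restr f == restr g) = [forall r in T, f r == g r].
  apply/eqP/forall_inP => [E r rT | E]; last first.
    by apply/ffunP=> r; rewrite !ffunE; case: ifP => // /E/eqP.
  by move/ffunP: E => /(_ r); rewrite !ffunE rT => ->.
have := @fibers_card1P (loc n) _ (pffun_on o T predT) key (fun c => restr_on _).
rewrite card_pffun_on cardT4 card_ord card_loc => /(_ erefl) fibP.
have fiberE f : [set c | key c == restr f] =
                [set c | [forall r in T, assoc_array M r c == f r]].
  by apply/setP=> c; rewrite !inE eq_restr; apply: eq_forallb_in => r _; rewrite -val_eqE.
have keyE x y : (key x == key y) = [forall r in T, assoc_array M r x == assoc_array M r y].
  by rewrite eq_restr; apply: eq_forallb_in => r _; rewrite -val_eqE.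
have -> : (forall x y, [forall r in T, assoc_array M r x == assoc_array M r y] -> x = y)
          <-> injective key.
  split=> [inj x y | inj x y E]; first by move/eqP; rewrite keyE => /inj.
  by apply: inj; apply/eqP; rewrite keyE.
rewrite -fibP; split=> [fib1 b bT | fib1 f]; last by rewrite -fiberE fib1.
have -> : b = restr b.
  apply/ffunP=> r; rewrite ffunE; case: ifPn => // rT; apply/eqP; apply: contraNT rT.
  by case/pffun_onP: bT => /subsetP supp _ /supp.
by rewrite fiberE fib1.
Qed.

Lemma ord2_cases (j : 'I_2) : j = ord0 \/ j = ord_max.
Proof. by case: j => [[|[|//]] ?]; [left | right]; apply/val_inj. Qed.

Lemma rows_agreeE (T : {set 'I_s * 'I_2}) (D S : seq nat) x y :
  top_justified T ->
  (forall i : 'I_s, (val i \in D) = ((i, ord_max) \in T)) ->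
  (forall i : 'I_s, (val i \in S) = ((i, ord0) \in T) && ((i, ord_max) \notin T)) ->
  all (fun i => i < s) (D ++ S) ->
  [forall r in T, assoc_array M r x == assoc_array M r y] = block_agree D S x y.
Proof.
move=> tj inD inS; rewrite all_cat => /andP[/allP Ds /allP Ss].
pose agree (r : 'I_s * 'I_2) := assoc_array M r x == assoc_array M r y.
have symbolE (i : 'I_s) :
    (symbol i x == symbol i y) = agree (i, ord0) && agree (i, ord_max).
  by rewrite /agree !assoc_arrayE /= (eqn_divmod n).
have radixE (i : 'I_s) : (symbol i x %/ n == symbol i y %/ n) = agree (i, ord0).
  by rewrite /agree !assoc_arrayE.
apply/forall_inP/andP => [agr | [/allP agrD /allP agrS] [i j] ijT].
  split; apply/allP=> k kDS.
    have iT : (Ordinal (Ds k kDS), ord_max) \in T by rewrite -inD.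
    by rewrite -[k]/(val (Ordinal (Ds k kDS))) symbolE /agree !agr ?tj.
  have iT : (Ordinal (Ss k kDS), ord0) \in T.
    by have := inS (Ordinal (Ss k kDS)); rewrite /= kDS => /esym/andP[].
  by rewrite -[k]/(val (Ordinal (Ss k kDS))) radixE /agree agr.
have [iD | iS] := boolP ((i, ord_max) \in T).
  have /agrD : val i \in D by rewrite inD.
  by rewrite symbolE => /andP[]; case: (ord2_cases j) => ->.
have j0 : j = ord0 by case: (ord2_cases j) ijT => -> // ijT; rewrite ijT in iS.
rewrite j0 in ijT *; have /agrS : val i \in S by rewrite inS ijT.
by rewrite radixE.
Qed.

Lemma strongly_orthogonal_blocksP :
  strongly_orthogonal s M <-> forall D S, block D S -> block_injective D S.
Proof.
split=> [[_ ooa] D S | blk].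
  rewrite /block => /and3P[uDS DSs /eqP size4].
  move: (uDS); rewrite cat_uniq => /and3P[uD /hasPn DS uS].
  pose T := [set r : 'I_s * 'I_2 | (val r.1 \in D) || (val r.1 \in S) && (r.2 == ord0)].
  have tj : top_justified T by move=> i; rewrite !inE /= => /orP[-> | /andP[->]].
  have inD i : (val i \in D) = ((i, ord_max) \in T) by rewrite inE /= andbF orbF.
  have inS i : (val i \in S) = ((i, ord0) \in T) && ((i, ord_max) \notin T).
    rewrite !inE /= andbF andbT !orbF.
    case: (boolP (val i \in S)) => [iS | _]; last by rewrite orbF andbN.
    by rewrite orbT (DS _ iS).
  clearbody T.
  have cardT : #|T| = 4.
    rewrite card_top_justified // -size4; move: DSs; rewrite all_cat => /andP[Ds Ss].
    by rewrite -(card_val_in uD Ds) -(card_val_in uS Ss); congr (_.*2 + _);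
      apply: eq_card => i; rewrite !inE ?inD ?inS.
  move=> x y; rewrite -(rows_agreeE x y tj inD inS DSs).
  exact: (proj1 (ooa_rowsP cardT) (ooa T cardT tj)).
split=> [|T cardT tj]; first by rewrite card_loc.
apply/ooa_rowsP => // x y.
pose D := [seq val i | i <- enum [set i | (i, ord_max) \in T]].
pose S := [seq val i | i <- enum [set i | ((i, ord0) \in T) && ((i, ord_max) \notin T)]].
have inD i : (val i \in D) = ((i, ord_max) \in T).
  by rewrite mem_map ?mem_enum ?inE //; apply: val_inj.
have inS i : (val i \in S) = ((i, ord0) \in T) && ((i, ord_max) \notin T).
  by rewrite mem_map ?mem_enum ?inE //; apply: val_inj.
have DSs : all (fun i => i < s) (D ++ S).
  by rewrite -map_cat; apply/allP=> _ /mapP[i _ ->]; apply: ltn_ord.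
rewrite (rows_agreeE x y tj inD inS DSs); apply: blk; apply/and3P; split=> //.
  rewrite -map_cat map_inj_uniq; last exact: val_inj.
  rewrite cat_uniq !enum_uniq andbT /=; apply/hasPn=> i.
  by rewrite !mem_enum !inE => /andP[_].
by rewrite !size_map -!cardE -card_top_justified ?cardT.
Qed.

End Blocks.

Lemma iff_and (A B C D : Prop) : (A <-> C) -> (B <-> D) -> (A /\ B <-> C /\ D).
Proof. by move=> -> ->. Qed.

Lemma injective_congr (T : Type) (P Q : T -> T -> bool) :
  (forall x y, P x y = Q x y) ->
  (forall x y, P x y -> x = y) <-> (forall x y, Q x y -> x = y).
Proof. by move=> PQ; split=> inj x y; [rewrite -PQ | rewrite PQ]; apply: inj. Qed.

Section Conditions.
Variables (n : nat) (M : nat -> array n).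

Lemma radix_lt (A : array n) x : A x < n * n -> radix A x < n.
Proof. exact: divn_lt. Qed.

Lemma composite_lt (A B : array n) x :
  A x < n * n -> B x < n * n -> composite A B x < n * n.
Proof. by move=> Ax Bx; apply: digits_lt; apply: radix_lt. Qed.

Lemma eq_composite (A B : array n) x y : (forall x, B x < n * n) ->
  (composite A B x == composite A B y) =
  (radix A x == radix A y) && (radix B x == radix B y).
Proof. by move=> B_lt; rewrite eqn_digits ?radix_lt. Qed.

Lemma eq_symbol0 x y :
  (symbol M 0 x == symbol M 0 y) = (lx1 x == lx1 y) && (lx2 x == lx2 y).
Proof. by rewrite /= eqn_digits. Qed.

Lemma eq_symbol1 x y :
  (symbol M 1 x == symbol M 1 y) = (lx3 x == lx3 y) && (lx4 x == lx4 y).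
Proof. by rewrite /= eqn_digits. Qed.

Lemma eq_symbol0_radix x y : (symbol M 0 x %/ n == symbol M 0 y %/ n) = (lx1 x == lx1 y).
Proof. by rewrite /= !divn_digits. Qed.

Lemma eq_symbol1_radix x y : (symbol M 1 x %/ n == symbol M 1 y %/ n) = (lx3 x == lx3 y).
Proof. by rewrite /= !divn_digits. Qed.

Lemma block_coordinates : block_injective M [:: 0; 1] [::].
Proof.
move=> [[[x1 x2] x3] x4] [[[y1 y2] y3] y4].
rewrite /block_agree /= eq_symbol0 eq_symbol1 !andbT -!andbA.
move=> /and4P[/eqP e1 /eqP e2 /eqP e3 /eqP e4].
by move: e1 e2 e3 e4; rewrite /lx1 /lx2 /lx3 /lx4 /= => -> -> -> ->.
Qed.

Ltac agree_tac :=
  rewrite /block_agree /= ?eq_symbol0 ?eq_symbol1 ?eq_symbol0_radix ?eq_symbol1_radix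
          ?eq_composite // /radix;
  by do ![case: (_ == _)].

Lemma sudoku_blocks k : sudoku (M k) ->
  [/\ block_injective M [:: 0; k.+2] [::], block_injective M [:: 1; k.+2] [::]
    & block_injective M [:: k.+2] [:: 0; 1]].
Proof.
case=> Mk_lt rows cols boxes; have cardL : #|loc n| = n * n * (n * n).
  by rewrite card_loc; lia.
split; [move: rows | move: cols | move: boxes];
  rewrite (lines_card1P _ _ Mk_lt cardL); apply: (iffLR (injective_congr _)) => x y;
  agree_tac.
Qed.

Lemma orth_block i j : (forall x, M i x < n * n) -> (forall x, M j x < n * n) ->
  orth_on setT (n * n) (n * n) (M i) (M j) -> block_injective M [:: i.+2; j.+2] [::].
Proof.
move=> Mi_lt Mj_lt; rewrite orth_on_setTP // ?card_loc; last by lia.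
by apply: (iffLR (injective_congr _)) => x y; agree_tac.
Qed.

Lemma subsquares_latinP k : (forall x, M k x < n * n) ->
  subsquares_latin (radix (M k)) <->
  block_injective M [:: 0] [:: 1; k.+2] /\ block_injective M [:: 1] [:: 0; k.+2].
Proof.
move=> Mk_lt; have Rk_lt x : radix (M k) x < n := radix_lt (Mk_lt x).
have cardL : #|loc n| = n * n * n * n by rewrite card_loc; lia.
rewrite /subsquares_latin !(lines3_card1P _ _ _ Rk_lt cardL).
by apply: iff_and; apply: injective_congr => x y; agree_tac.
Qed.

Lemma sudoku_compositeP i j : (forall x, M i x < n * n) -> (forall x, M j x < n * n) ->
  sudoku (composite (M i) (M j)) <->
  [/\ block_injective M [:: 0] [:: i.+2; j.+2], block_injective M [:: 1] [:: i.+2; j.+2]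
    & block_injective M [::] [:: 0; 1; i.+2; j.+2]].
Proof.
move=> Mi_lt Mj_lt; have N_lt x : composite (M i) (M j) x < n * n by apply: composite_lt.
have cardL : #|loc n| = n * n * (n * n) by rewrite card_loc; lia.
split=> [[_ rows cols boxes] | [rows cols boxes]].
  move: rows cols boxes; rewrite !(lines_card1P _ _ N_lt cardL) => rows cols boxes.
  by split; [move: rows | move: cols | move: boxes];
    apply: (iffLR (injective_congr _)) => x y; agree_tac.
split=> //; [move: rows | move: cols | move: boxes]; rewrite (lines_card1P _ _ N_lt cardL);
  by apply: (iffRL (injective_congr _)) => x y; agree_tac.
Qed.

Lemma orth_large_rowsP i j : (forall x, M i x < n * n) -> (forall x, M j x < n * n) ->
  (forall a, orth_on (large_row a) n (n * n) (radix (M i)) (M j)) <->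
  block_injective M [:: j.+2] [:: 0; i.+2].
Proof.
move=> Mi_lt Mj_lt; have Ri_lt x : radix (M i) x < n := radix_lt (Mi_lt x).
rewrite (orth_on_fibersP (@lx1 n) Ri_lt Mj_lt) ?card_loc; last by lia.
by apply: injective_congr => x y; agree_tac.
Qed.

Lemma orth_large_colsP i j : (forall x, M i x < n * n) -> (forall x, M j x < n * n) ->
  (forall a, orth_on (large_col a) n (n * n) (radix (M i)) (M j)) <->
  block_injective M [:: j.+2] [:: 1; i.+2].
Proof.
move=> Mi_lt Mj_lt; have Ri_lt x : radix (M i) x < n := radix_lt (Mi_lt x).
rewrite (orth_on_fibersP (@lx3 n) Ri_lt Mj_lt) ?card_loc; last by lia.
by apply: injective_congr => x y; agree_tac.
Qed.

Section Triples.
Variables i j k : nat.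
Hypotheses (Mi_lt : forall x, M i x < n * n) (Mj_lt : forall x, M j x < n * n)
           (Mk_lt : forall x, M k x < n * n).

Let N_lt x : composite (M i) (M j) x < n * n. Proof. exact: composite_lt. Qed.
Let Rk_lt x : radix (M k) x < n. Proof. exact: radix_lt. Qed.

Lemma composite_large_rowsP :
  (forall a, orth_on (large_row a) (n * n) n (composite (M i) (M j)) (radix (M k))) <->
  block_injective M [::] [:: 0; i.+2; j.+2; k.+2].
Proof.
rewrite (orth_on_fibersP (@lx1 n) N_lt Rk_lt) ?card_loc; last by lia.
by apply: injective_congr => x y; agree_tac.
Qed.

Lemma composite_large_colsP :
  (forall a, orth_on (large_col a) (n * n) n (composite (M i) (M j)) (radix (M k))) <->
  block_injective M [::] [:: 1; i.+2; j.+2; k.+2].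
Proof.
rewrite (orth_on_fibersP (@lx3 n) N_lt Rk_lt) ?card_loc; last by lia.
by apply: injective_congr => x y; agree_tac.
Qed.

Lemma composite_orthP :
  orth_on setT (n * n) (n * n) (composite (M i) (M j)) (M k) <->
  block_injective M [:: k.+2] [:: i.+2; j.+2].
Proof.
rewrite (orth_on_setTP N_lt Mk_lt) ?card_loc; last by lia.
by apply: injective_congr => x y; agree_tac.
Qed.

Lemma composite_orth_compositeP l : (forall x, M l x < n * n) ->
  orth_on setT (n * n) (n * n) (composite (M i) (M j)) (composite (M k) (M l)) <->
  block_injective M [::] [:: i.+2; j.+2; k.+2; l.+2].
Proof.
move=> Ml_lt; have L_lt x : composite (M k) (M l) x < n * n by apply: composite_lt.
rewrite (orth_on_setTP N_lt L_lt) ?card_loc; last by lia.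
by apply: injective_congr => x y; agree_tac.
Qed.

End Triples.

End Conditions.

Section Proposition.
Variables (s n : nat) (M : nat -> array n).

Definition latin_condition : Prop :=
  forall i, i < s - 2 -> subsquares_latin (radix (M i)).

Definition pair_condition : Prop :=
  forall i j, i < s - 2 -> j < s - 2 -> i != j ->
    [/\ sudoku (composite (M i) (M j)),
        (forall a : 'I_n, orth_on (large_row a) n (n * n) (radix (M i)) (M j))
      & (forall a : 'I_n, orth_on (large_col a) n (n * n) (radix (M i)) (M j))].

Definition triple_condition : Prop :=
  forall i j k, i < s - 2 -> j < s - 2 -> k < s - 2 -> i != j -> i != k -> j != k ->
    [/\ (forall a : 'I_n,
           orth_on (large_row a) (n * n) n (composite (M i) (M j)) (radix (M k))),
        (forall a : 'I_n,
           orth_on (large_col a) (n * n) n (composite (M i) (M j)) (radix (M k)))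
      & orth_on setT (n * n) (n * n) (composite (M i) (M j)) (M k)].

Definition quadruple_condition : Prop :=
  forall i j k l, i < s - 2 -> j < s - 2 -> k < s - 2 -> l < s - 2 ->
    uniq [:: i; j; k; l] ->
    orth_on setT (n * n) (n * n) (composite (M i) (M j)) (composite (M k) (M l)).

Hypothesis M_lt : forall k x, k < s - 2 -> M k x < n * n.

Let Mk_lt k : k < s - 2 -> forall x, M k x < n * n.
Proof. by move=> k_lt x; apply: M_lt. Qed.

Ltac block_tac := rewrite /block /= ?inE; lia.

Lemma conditions_of_blocks : (forall D S, block s D S -> block_injective M D S) ->
  [/\ latin_condition, pair_condition, triple_condition & quadruple_condition].
Proof.
move=> blk; split.
- move=> k k_lt; apply/(subsquares_latinP (Mk_lt k_lt)).
  by split; apply: blk; block_tac.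
- move=> i j i_lt j_lt ij; have [Mi Mj] := (Mk_lt i_lt, Mk_lt j_lt); split.
  + by apply/(sudoku_compositeP Mi Mj); split; apply: blk; block_tac.
  + by apply/(orth_large_rowsP Mi Mj); apply: blk; block_tac.
  + by apply/(orth_large_colsP Mi Mj); apply: blk; block_tac.
- move=> i j k i_lt j_lt k_lt ij ik jk.
  have Mi := Mk_lt i_lt; have Mj := Mk_lt j_lt; have Mk := Mk_lt k_lt; split.
  + by apply/(composite_large_rowsP Mi Mj Mk); apply: blk; block_tac.
  + by apply/(composite_large_colsP Mi Mj Mk); apply: blk; block_tac.
  + by apply/(composite_orthP Mi Mj Mk); apply: blk; block_tac.
- move=> i j k l i_lt j_lt k_lt l_lt ijkl.
  apply/(composite_orth_compositeP (Mk_lt i_lt) (Mk_lt j_lt) (Mk_lt k_lt) (Mk_lt l_lt)).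
  by apply: blk; move: ijkl; block_tac.
Qed.

Section Blocks_of_conditions.
Hypothesis M_sudoku : forall i, i < s - 2 -> sudoku (M i).
Hypothesis M_orth : forall i j, i < s - 2 -> j < s - 2 -> i != j ->
  orth_on setT (n * n) (n * n) (M i) (M j).
Hypotheses (latin : latin_condition) (pair : pair_condition)
           (triple : triple_condition) (quadruple : quadruple_condition).

Lemma latin_blocks k : k.+2 < s ->
  block_injective M [:: 0] [:: 1; k.+2] /\ block_injective M [:: 1] [:: 0; k.+2].
Proof.
move=> k_lt; have {}k_lt : k < s - 2 by lia.
by apply/(subsquares_latinP (Mk_lt k_lt)); apply: latin.
Qed.

Lemma pair_blocks i j : i.+2 < s -> j.+2 < s -> i != j ->
  [/\ block_injective M [:: 0] [:: i.+2; j.+2], block_injective M [:: 1] [:: i.+2; j.+2],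
      block_injective M [::] [:: 0; 1; i.+2; j.+2],
      block_injective M [:: j.+2] [:: 0; i.+2] & block_injective M [:: j.+2] [:: 1; i.+2]].
Proof.
move=> i_lt j_lt ij; have [{}i_lt {}j_lt] : i < s - 2 /\ j < s - 2 by lia.
have Mi_lt := Mk_lt i_lt; have Mj_lt := Mk_lt j_lt.
have [/(sudoku_compositeP Mi_lt Mj_lt) [? ? ?]
      /(orth_large_rowsP Mi_lt Mj_lt) ? /(orth_large_colsP Mi_lt Mj_lt) ?]
  := pair i_lt j_lt ij.
by split.
Qed.

Lemma triple_blocks i j k : i.+2 < s -> j.+2 < s -> k.+2 < s ->
  i != j -> i != k -> j != k ->
  [/\ block_injective M [::] [:: 0; i.+2; j.+2; k.+2],
      block_injective M [::] [:: 1; i.+2; j.+2; k.+2]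
    & block_injective M [:: k.+2] [:: i.+2; j.+2]].
Proof.
move=> i_lt j_lt k_lt ij ik jk.
have [{}i_lt {}j_lt {}k_lt] : [/\ i < s - 2, j < s - 2 & k < s - 2] by split; lia.
have Mi_lt := Mk_lt i_lt; have Mj_lt := Mk_lt j_lt; have Mk_lt' := Mk_lt k_lt.
have [/(composite_large_rowsP Mi_lt Mj_lt Mk_lt') ?
      /(composite_large_colsP Mi_lt Mj_lt Mk_lt') ?
      /(composite_orthP Mi_lt Mj_lt Mk_lt') ?] := triple i_lt j_lt k_lt ij ik jk.
by split.
Qed.

Lemma quadruple_block i j k l : i.+2 < s -> j.+2 < s -> k.+2 < s -> l.+2 < s ->
  uniq [:: i; j; k; l] -> block_injective M [::] [:: i.+2; j.+2; k.+2; l.+2].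
Proof.
move=> i_lt j_lt k_lt l_lt ijkl.
have [{}i_lt {}j_lt {}k_lt {}l_lt] : [/\ i < s - 2, j < s - 2, k < s - 2 & l < s - 2].
  by split; lia.
apply/(composite_orth_compositeP (Mk_lt i_lt) (Mk_lt j_lt) (Mk_lt k_lt) (Mk_lt l_lt)).
exact: quadruple.
Qed.

Lemma full2_block a b : a < b < s -> block_injective M [:: a; b] [::].
Proof.
case: a b => [|[|a]] [|[|b]] // /andP[ab b_lt]; first exact: block_coordinates.
- by case: (sudoku_blocks (M_sudoku (_ : b < s - 2))) => //; lia.
- by case: (sudoku_blocks (M_sudoku (_ : b < s - 2))) => //; lia.
- have [a_lt b_lt'] : a < s - 2 /\ b < s - 2 by lia.
  by apply: (orth_block (Mk_lt a_lt) (Mk_lt b_lt')); apply: M_orth; lia.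
Qed.

Lemma full_radix2_block a c d : a < s -> c < d < s -> a != c -> a != d ->
  block_injective M [:: a] [:: c; d].
Proof.
case: a c d => [|[|a]] [|[|c]] [|[|d]] a_lt /andP[cd d_lt] ac ad; try by exfalso; lia.
- by case: (latin_blocks d_lt).
- by case: (pair_blocks (_ : c.+2 < s) d_lt _) => //; lia.
- by case: (latin_blocks d_lt).
- by case: (pair_blocks (_ : c.+2 < s) d_lt _) => //; lia.
- by case: (sudoku_blocks (M_sudoku (_ : a < s - 2))) => //; lia.
- by case: (pair_blocks d_lt a_lt _) => //; lia.
- by case: (pair_blocks d_lt a_lt _) => //; lia.
- by case: (triple_blocks (_ : c.+2 < s) d_lt a_lt _ _ _) => //; lia.
Qed.

Lemma radix4_block a b c d : a < b < c -> c < d < s -> block_injective M [::] [:: a; b; c; d].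
Proof.
case: a b c d => [|[|a]] [|[|b]] [|[|c]] [|[|d]] /andP[ab bc] /andP[cd d_lt];
  try by exfalso; lia.
- by case: (pair_blocks (_ : c.+2 < s) d_lt _) => //; lia.
- by case: (triple_blocks (_ : b.+2 < s) (_ : c.+2 < s) d_lt _ _ _) => //; lia.
- by case: (triple_blocks (_ : b.+2 < s) (_ : c.+2 < s) d_lt _ _ _) => //; lia.
- by apply: quadruple_block => //=; rewrite ?inE; lia.
Qed.

Lemma blocks_of_conditions D S : block s D S -> block_injective M D S.
Proof.
move=> blk x y.
rewrite -(block_agree_perm M (permEl (perm_sort leq D)) (permEl (perm_sort leq S))).
move: x y; have /and3P[uDS DSs size4] := block_sort blk.
have sorted_sort T : uniq T -> sorted ltn (sort leq T).
  by move=> uT; rewrite ltn_sorted_uniq_leq sort_uniq uT (sort_sorted leq_total).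
move: blk; rewrite /block cat_uniq => /and3P[/and3P[/sorted_sort sD _ /sorted_sort sS] _ _].
move: sD sS uDS DSs size4.
case: (sort leq D) (sort leq S) => [|a [|b [|? ?]]] [|c [|d [|e [|f [|? ?]]]]] //=;
  rewrite !inE => *.
- by apply: radix4_block; lia.
- by apply: full_radix2_block; lia.
- by apply: full2_block; lia.
Qed.

End Blocks_of_conditions.

End Proposition.

Theorem proposition3p2 (s n : nat) (M : nat -> array n) :
  3 <= s -> 1 <= n ->
  (forall i, i < s - 2 -> sudoku (M i)) ->
  (forall i j, i < s - 2 -> j < s - 2 -> i != j ->
     orth_on setT (n * n) (n * n) (M i) (M j)) ->
  (strongly_orthogonal s M <->
   [/\ (* (i) *)
       (forall i, i < s - 2 -> subsquares_latin (radix (M i))),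
       (* (ii) *)
       (forall i j, i < s - 2 -> j < s - 2 -> i != j ->
          [/\ sudoku (composite (M i) (M j)),
              (forall a : 'I_n,
                 orth_on (large_row a) n (n * n) (radix (M i)) (M j))
            & (forall a : 'I_n,
                 orth_on (large_col a) n (n * n) (radix (M i)) (M j))]),
       (* (iii) *)
       (forall i j k, i < s - 2 -> j < s - 2 -> k < s - 2 ->
          i != j -> i != k -> j != k ->
          [/\ (forall a : 'I_n,
                 orth_on (large_row a) (n * n) n
                   (composite (M i) (M j)) (radix (M k))),
              (forall a : 'I_n,
                 orth_on (large_col a) (n * n) n
                   (composite (M i) (M j)) (radix (M k)))
            & orth_on setT (n * n) (n * n) (composite (M i) (M j)) (M k)])
     & (* (iv) *)
       (forall i j k l, i < s - 2 -> j < s - 2 -> k < s - 2 -> l < s - 2 ->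
          uniq [:: i; j; k; l] ->
          orth_on setT (n * n) (n * n)
            (composite (M i) (M j)) (composite (M k) (M l)))]).
Proof.
move=> _ n_gt0 M_sudoku M_orth.
have M_lt k x : k < s - 2 -> M k x < n * n by case/M_sudoku => /(_ x).
rewrite (strongly_orthogonal_blocksP n_gt0 M_lt); split; first exact: conditions_of_blocks.
by case=> latin pair triple quadruple; apply: blocks_of_conditions.
Qed.
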